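(* Let $A_1,\dots,A_k$ be $2\times2$ real matrices with all entries strictly positive and norm $<1$, $d_i\in\mathbb R^2$, $T_i(x)=A_ix+d_i$, with $T_i(D)\subset D$ for all $i$ ($D$ the closed unit disc). There exists a constant $C$ such that for all $\theta,\theta'\in\mathcal Q_2$, all $n\in\mathbb N$ and all $\underline a\in\Sigma=\{1,\dots,k\}^{\mathbb N}$, \[ |a_1\cdots a_n|_\theta-|a_1\cdots a_n|_{\theta'}\le C\,|\theta-\theta'|. \]
   Context: $\mathbb{PR}^1$ is the space of lines through the origin, parametrised by the angle $\theta$ with the horizontal axis, and $|\theta-\theta'|$ is the angular distance. $\mathcal Q_2\subset\mathbb{PR}^1$ is the closed set of lines contained in the union of the closed second and fourth quadrants. For $\theta\in\mathbb{PR}^1$, $\pi_\theta$ is orthogonal projection onto the line through the origin perpendicular to $\theta$. For a word $w=a_1\cdots a_n$, $D_w=T_{a_1}\circ\cdots\circ T_{a_n}(D)$ and $|w|_\theta=-\log_2(|\pi_\theta(D_w)|/2)$, where $|\cdot|$ is the length of an interval. *)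

From Stdlib Require Import Reals.
From Coquelicot Require Import Coquelicot.
Open Scope R_scope.

Definition vec2 := (R * R)%type.

Record mat2 := Mat2 { m11 : R; m12 : R; m21 : R; m22 : R }.

Definition mat_apply (A : mat2) (x : vec2) : vec2 :=
  (m11 A * fst x + m12 A * snd x, m21 A * fst x + m22 A * snd x).

Definition dot2 (x y : vec2) : R := fst x * fst y + snd x * snd y.

Definition norm2 (x : vec2) : R := sqrt (fst x ^ 2 + snd x ^ 2).

Definition op_norm (A : mat2) : Rbar :=
  Lub_Rbar (fun r => exists x : vec2, norm2 x <= 1 /\ r = norm2 (mat_apply A x)).

Definition mat_pos (A : mat2) : Prop :=
  0 < m11 A /\ 0 < m12 A /\ 0 < m21 A /\ 0 < m22 A.

Definition unit_disc (x : vec2) : Prop := norm2 x <= 1.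

Definition affine (A : mat2) (d : vec2) (x : vec2) : vec2 :=
  (fst (mat_apply A x) + fst d, snd (mat_apply A x) + snd d).

(* word_map A d a n = T_{a 0} o T_{a 1} o ... o T_{a (n-1)}
   (the word a_1 ... a_n of the paper, indexed from 0). *)
Fixpoint word_map (A : nat -> mat2) (d : nat -> vec2) (a : nat -> nat) (n : nat)
  (x : vec2) : vec2 :=
  match n with
  | O => x
  | S m => word_map A d a m (affine (A (a m)) (d (a m)) x)
  end.

Definition D_word (A : nat -> mat2) (d : nat -> vec2) (a : nat -> nat) (n : nat)
  (y : vec2) : Prop :=
  exists x, unit_disc x /\ y = word_map A d a n x.

(* The line through the origin at angle theta has direction (cos t, sin t);
   pi_theta projects orthogonally onto the perpendicular line, spanned by the
   unit vector (-sin t, cos t). The projection of a set S is identified with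
   the set of its coordinates along that unit vector. *)
Definition perp_dir (theta : R) : vec2 := (- sin theta, cos theta).

Definition proj_coords (theta : R) (S : vec2 -> Prop) (t : R) : Prop :=
  exists y, S y /\ t = dot2 y (perp_dir theta).

Definition proj_length (theta : R) (S : vec2 -> Prop) : R :=
  real (Lub_Rbar (proj_coords theta S)) - real (Glb_Rbar (proj_coords theta S)).

Definition log2 (x : R) : R := ln x / ln 2.

Definition word_size (A : nat -> mat2) (d : nat -> vec2) (a : nat -> nat) (n : nat)
  (theta : R) : R :=
  - log2 (proj_length theta (D_word A d a n) / 2).

(* Q_2: lines in the union of the closed 2nd and 4th quadrants, i.e. angles in
   [pi/2, pi] (pi identified with 0 in PR^1). On this arc the angular distance in
   PR^1 coincides with the ordinary real distance |theta - theta'|. *)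
Definition in_Q2 (theta : R) : Prop := PI / 2 <= theta <= PI.

From Stdlib Require Import Reals Lra Psatz.
From Coquelicot Require Import Coquelicot.
Open Scope R_scope.

(* The map of a word is affine with linear part M = A_{a_1} ... A_{a_n}, so the
   projection of D_w onto the line perpendicular to theta is an interval of
   half-width |M^T u_theta|, with u_theta = (-sin theta, cos theta).  Positive
   matrices send every positive vector into the cone {L^-1 <= y/x <= L} for a
   uniform L, so the columns of M lie in that cone.  For theta in Q2 each
   coordinate of M^T u_theta is, up to sign, p sin theta - r cos theta with
   (p, r) a column of M; both terms are nonnegative, so this quantity is at
   least (p + r) / (2L), while its derivative in theta is at most p + r.  Hence
   |M^T u_theta'| <= (1 + 2L|theta - theta'|) |M^T u_theta|, and taking -log_2
   gives the Lipschitz bound with C = 2L / ln 2. *)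

Definition in_cone (L p r : R) : Prop := 0 < p /\ 0 < r /\ p <= L * r /\ r <= L * p.

Lemma in_cone_comb L p r p' r' s s' : in_cone L p r -> in_cone L p' r' ->
  0 < s -> 0 < s' -> in_cone L (s * p + s' * p') (s * r + s' * r').
Proof. unfold in_cone; intros; repeat split; nra. Qed.

Lemma in_cone_le L L' p r : L <= L' -> in_cone L p r -> in_cone L' p r.
Proof. unfold in_cone; intros; repeat split; nra. Qed.

Lemma in_cone_of_pos p r : 0 < p -> 0 < r -> in_cone (p / r + r / p) p r.
Proof.
  intros hp hr. assert (0 < p / r) by (apply Rdiv_lt_0_compat; auto).
  assert (0 < r / p) by (apply Rdiv_lt_0_compat; auto).
  repeat split; auto.
  - replace ((p / r + r / p) * r) with (p + r / p * r) by (field; lra). nra.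
  - replace ((p / r + r / p) * p) with (p / r * p + r) by (field; lra). nra.
Qed.

Definition mat_mul (M N : mat2) : mat2 :=
  Mat2 (m11 M * m11 N + m12 M * m21 N) (m11 M * m12 N + m12 M * m22 N)
       (m21 M * m11 N + m22 M * m21 N) (m21 M * m12 N + m22 M * m22 N).

Definition mat_id : mat2 := Mat2 1 0 0 1.

Definition mat_transpose (M : mat2) : mat2 := Mat2 (m11 M) (m21 M) (m12 M) (m22 M).

Definition col_cone (L : R) (M : mat2) : Prop :=
  in_cone L (m11 M) (m21 M) /\ in_cone L (m12 M) (m22 M).

Lemma col_cone_mat_pos L M : col_cone L M -> mat_pos M.
Proof. unfold col_cone, in_cone, mat_pos; tauto. Qed.

Lemma col_cone_le L L' M : L <= L' -> col_cone L M -> col_cone L' M.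
Proof. intros hL [h1 h2]; split; eapply in_cone_le; eauto. Qed.

(* The columns of [M N] are positive combinations of the columns of [M]. *)
Lemma col_cone_mul L M N : col_cone L M -> mat_pos N -> col_cone L (mat_mul M N).
Proof.
  intros [h1 h2] [g1 [g2 [g3 g4]]]; unfold mat_mul; split; cbn;
    rewrite !(Rmult_comm (m11 M)), !(Rmult_comm (m12 M)),
      !(Rmult_comm (m21 M)), !(Rmult_comm (m22 M));
    apply in_cone_comb; auto.
Qed.

Lemma mat_pos_col_cone M : mat_pos M -> exists L, 1 <= L /\ col_cone L M.
Proof.
  intros [h1 [h2 [h3 h4]]].
  set (L1 := m11 M / m21 M + m21 M / m11 M).
  set (L2 := m12 M / m22 M + m22 M / m12 M).
  set (L := Rmax 1 (Rmax L1 L2)).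
  assert (hL1 : L1 <= L) by (eapply Rle_trans; [apply Rmax_l | apply Rmax_r]).
  assert (hL2 : L2 <= L) by (eapply Rle_trans; [apply Rmax_r | apply Rmax_r]).
  exists L. split; [apply Rmax_l|].
  split; eapply in_cone_le; [exact hL1 | apply in_cone_of_pos; assumption
                            | exact hL2 | apply in_cone_of_pos; assumption].
Qed.

Lemma col_cone_uniform (k : nat) (A : nat -> mat2) :
  (forall i, (i < k)%nat -> mat_pos (A i)) ->
  exists L, 1 <= L /\ forall i, (i < k)%nat -> col_cone L (A i).
Proof.
  induction k as [|k IH]; intros hA.
  - exists 1. split; [lra | intros i hi; lia].
  - destruct IH as [L [hL HL]]; [intros i hi; apply hA; lia|].
    destruct (mat_pos_col_cone (A k)) as [L' [hL' HL']]; [apply hA; lia|].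
    exists (Rmax L L'). split; [eapply Rle_trans; [exact hL | apply Rmax_l]|].
    intros i hi. destruct (Nat.eq_dec i k) as [->|ne].
    + eapply col_cone_le; [apply Rmax_r | exact HL'].
    + eapply col_cone_le; [apply Rmax_l | apply HL; lia].
Qed.

Lemma in_Q2_sin_cos t :
  in_Q2 t -> 0 <= sin t /\ cos t <= 0 /\ 1 <= sin t - cos t.
Proof.
  intros [h1 h2]. pose proof PI_RGT_0.
  assert (hs : 0 <= sin t) by (apply sin_ge_0; lra).
  assert (hc : cos t <= 0) by (apply cos_le_0; lra).
  pose proof (sin2_cos2 t) as hsc. unfold Rsqr in hsc.
  repeat split; nra.
Qed.

Lemma sin_cos_comb_lipschitz p r t t' : 0 <= p -> 0 <= r ->
  (p * sin t' - r * cos t') - (p * sin t - r * cos t) <= (p + r) * Rabs (t' - t).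
Proof.
  intros hp hr.
  destruct (MVT_abs (mult_real_fct p sin - mult_real_fct r cos)%F
     (fun x => p * cos x - r * - sin x) t t') as [c [Hc _]].
  { intros c _. apply derivable_pt_lim_minus; apply derivable_pt_lim_scal;
      [apply derivable_pt_lim_sin | apply derivable_pt_lim_cos]. }
  unfold minus_fct, mult_real_fct in Hc.
  assert (Hder : Rabs (p * cos c - r * - sin c) <= p + r).
  { pose proof (SIN_bound c); pose proof (COS_bound c). apply Rabs_le; split; nra. }
  pose proof (Rabs_pos (t' - t)).
  pose proof (Rle_abs ((p * sin t' - r * cos t') - (p * sin t - r * cos t))).
  rewrite Hc in *. nra.
Qed.

Lemma sin_cos_comb_ratio L p r t t' : 1 <= L -> in_cone L p r ->
  in_Q2 t -> in_Q2 t' ->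
  0 < p * sin t - r * cos t /\
  p * sin t' - r * cos t' <= (1 + 2 * L * Rabs (t - t')) * (p * sin t - r * cos t).
Proof.
  intros hL [hp [hr [hpr hrp]]] q q'.
  destruct (in_Q2_sin_cos t q) as [hs [hc hsc]].
  set (f := p * sin t - r * cos t).
  assert (a1 : p * 1 <= p * (sin t - cos t)) by (apply Rmult_le_compat_l; lra).
  assert (a2 : r * 1 <= r * (sin t - cos t)) by (apply Rmult_le_compat_l; lra).
  assert (Hp : p <= L * f).
  { assert (0 <= (L - 1) * p * sin t) by (apply Rmult_le_pos; nra).
    assert (0 <= (L * r - p) * - cos t) by (apply Rmult_le_pos; nra).
    unfold f; nra. }
  assert (Hr : r <= L * f).
  { assert (0 <= (L - 1) * r * - cos t) by (apply Rmult_le_pos; nra).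
    assert (0 <= (L * p - r) * sin t) by (apply Rmult_le_pos; nra).
    unfold f; nra. }
  split; [nra|].
  pose proof (sin_cos_comb_lipschitz p r t t' (Rlt_le _ _ hp) (Rlt_le _ _ hr)) as hlip.
  rewrite Rabs_minus_sym in hlip. fold f in hlip.
  pose proof (Rabs_pos (t - t')). nra.
Qed.

Fixpoint word_mat (A : nat -> mat2) (a : nat -> nat) (n : nat) : mat2 :=
  match n with
  | O => mat_id
  | S m => mat_mul (word_mat A a m) (A (a m))
  end.

Lemma word_map_affine A d a n :
  exists c, forall x, word_map A d a n x = affine (word_mat A a n) c x.
Proof.
  induction n as [|m [c Hc]]; simpl.
  - exists (0, 0). intros [x1 x2]. unfold affine, mat_apply, mat_id; simpl. f_equal; ring.
  - exists (affine (word_mat A a m) c (d (a m))). intros x. rewrite Hc.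
    destruct x as [x1 x2]. unfold affine, mat_apply, mat_mul; simpl. f_equal; ring.
Qed.

Lemma mat_mul_id_l M : mat_mul mat_id M = M.
Proof. destruct M; unfold mat_mul, mat_id; cbn; f_equal; ring. Qed.

Lemma word_mat_col_cone L A a n : (forall j, col_cone L (A (a j))) ->
  word_mat A a n = mat_id \/ col_cone L (word_mat A a n).
Proof.
  intros hA. induction n as [|m IH]; [now left|]. right; simpl.
  destruct IH as [-> | IH].
  - rewrite mat_mul_id_l. apply hA.
  - apply col_cone_mul; [exact IH | apply col_cone_mat_pos with L, hA].
Qed.

Lemma norm2_sqr x : norm2 x * norm2 x = fst x ^ 2 + snd x ^ 2.
Proof. apply sqrt_sqrt. nra. Qed.

Lemma dot2_le_norm2 x w : unit_disc x -> Rabs (dot2 x w) <= norm2 w.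
Proof.
  intros hx. unfold unit_disc, dot2 in *.
  pose proof (norm2_sqr x) as ex. pose proof (norm2_sqr w) as ew.
  pose proof (sqrt_pos (fst w ^ 2 + snd w ^ 2)) as hw. fold (norm2 w) in hw.
  assert (hx2 : fst x ^ 2 + snd x ^ 2 <= 1).
  { pose proof (sqrt_pos (fst x ^ 2 + snd x ^ 2)). unfold norm2 in *. nra. }
  assert (Hcs : (fst x * fst w + snd x * snd w) ^ 2 <= norm2 w * norm2 w).
  { rewrite ew.
    assert (Hlag : (fst x * fst w + snd x * snd w) ^ 2 + (fst x * snd w - snd x * fst w) ^ 2
                   = (fst x ^ 2 + snd x ^ 2) * (fst w ^ 2 + snd w ^ 2)) by ring.
    assert ((fst x ^ 2 + snd x ^ 2) * (fst w ^ 2 + snd w ^ 2) <= 1 * (fst w ^ 2 + snd w ^ 2))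
      by (apply Rmult_le_compat_r; nra).
    pose proof (pow2_ge_0 (fst x * snd w - snd x * fst w)). lra. }
  apply Rabs_le; split; nra.
Qed.

Lemma dot2_norm2_attained w : exists x, unit_disc x /\ dot2 x w = norm2 w.
Proof.
  pose proof (norm2_sqr w) as ew.
  destruct (Req_dec (norm2 w) 0) as [h0 | hn].
  - exists (0, 0). unfold unit_disc, dot2; cbn [fst snd]. rewrite h0. split; [|ring].
    unfold norm2; cbn. rewrite Rmult_0_l, Rplus_0_l, sqrt_0. lra.
  - exists (fst w / norm2 w, snd w / norm2 w).
    assert (hsq : (fst w / norm2 w) ^ 2 + (snd w / norm2 w) ^ 2 = 1).
    { replace ((fst w / norm2 w) ^ 2 + (snd w / norm2 w) ^ 2)
        with ((fst w ^ 2 + snd w ^ 2) / (norm2 w * norm2 w)) by (field; exact hn).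
      rewrite <- ew. field. exact hn. }
    unfold unit_disc, dot2, norm2 at 1; cbn [fst snd]. split.
    + rewrite hsq, sqrt_1. lra.
    + replace (fst w / norm2 w * fst w + snd w / norm2 w * snd w)
        with ((fst w ^ 2 + snd w ^ 2) / norm2 w) by (field; exact hn).
      rewrite <- ew. field. exact hn.
Qed.

Lemma dot2_affine M c x u :
  dot2 (affine M c x) u = dot2 x (mat_apply (mat_transpose M) u) + dot2 c u.
Proof. unfold dot2, affine, mat_apply, mat_transpose; cbn. ring. Qed.

Lemma unit_disc_opp x : unit_disc x -> unit_disc (- fst x, - snd x).
Proof.
  unfold unit_disc, norm2; cbn [fst snd].
  now replace ((- fst x) ^ 2 + (- snd x) ^ 2) with (fst x ^ 2 + snd x ^ 2) by ring.
Qed.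

Lemma lub_dot2_disc w e :
  Lub_Rbar (fun s => exists x, unit_disc x /\ s = dot2 x w + e) = Finite (norm2 w + e).
Proof.
  apply is_lub_Rbar_unique. split.
  - intros s [x [hx ->]]. cbn. pose proof (dot2_le_norm2 x w hx) as hb.
    apply Rabs_le_between in hb. lra.
  - intros b hb. destruct (dot2_norm2_attained w) as [x [hx ex]].
    rewrite <- ex. apply hb. now exists x.
Qed.

Lemma glb_dot2_disc w e :
  Glb_Rbar (fun s => exists x, unit_disc x /\ s = dot2 x w + e) = Finite (- norm2 w + e).
Proof.
  apply is_glb_Rbar_unique. split.
  - intros s [x [hx ->]]. cbn. pose proof (dot2_le_norm2 x w hx) as hb.
    apply Rabs_le_between in hb. lra.
  - intros b hb. destruct (dot2_norm2_attained w) as [x [hx ex]].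
    replace (- norm2 w + e) with (dot2 (- fst x, - snd x) w + e)
      by (rewrite <- ex; unfold dot2; cbn; ring).
    apply hb. exists (- fst x, - snd x). split; [apply unit_disc_opp, hx | reflexivity].
Qed.

Definition proj_halfwidth (M : mat2) (t : R) : R :=
  norm2 (mat_apply (mat_transpose M) (perp_dir t)).

Lemma proj_length_affine_image f M c t : (forall x, f x = affine M c x) ->
  proj_length t (fun y => exists x, unit_disc x /\ y = f x) = 2 * proj_halfwidth M t.
Proof.
  intros hf.
  set (e := dot2 c (perp_dir t)).
  assert (hcoord : forall s, proj_coords t (fun y => exists x, unit_disc x /\ y = f x) s <->
    exists x, unit_disc x /\ s = dot2 x (mat_apply (mat_transpose M) (perp_dir t)) + e).
  { intros s; split.
    - intros [y [[x [hx ->]] ->]]. exists x. split; [exact hx|]. now rewrite hf, dot2_affine.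
    - intros [x [hx ->]]. exists (f x). split; [now exists x|]. now rewrite hf, dot2_affine. }
  unfold proj_length, proj_halfwidth.
  rewrite (Lub_Rbar_eqset _ _ hcoord), (Glb_Rbar_eqset _ _ hcoord),
    lub_dot2_disc, glb_dot2_disc. cbn. ring.
Qed.

Lemma norm2_pos x : fst x <> 0 -> 0 < norm2 x.
Proof.
  intros h. apply sqrt_lt_R0. pose proof (Rsqr_pos_lt _ h). unfold Rsqr in *. nra.
Qed.

Lemma norm2_le_scale x y T : 0 <= T ->
  Rabs (fst y) <= T * Rabs (fst x) -> Rabs (snd y) <= T * Rabs (snd x) ->
  norm2 y <= T * norm2 x.
Proof.
  intros hT h1 h2. unfold norm2.
  rewrite <- (sqrt_square T) at 1 by exact hT. rewrite <- sqrt_mult by nra.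
  apply sqrt_le_1; try nra.
  rewrite <- (pow2_abs (fst y)), <- (pow2_abs (snd y)),
    <- (pow2_abs (fst x)), <- (pow2_abs (snd x)).
  pose proof (Rabs_pos (fst y)). pose proof (Rabs_pos (snd y)). nra.
Qed.

Lemma proj_halfwidth_id t : proj_halfwidth mat_id t = 1.
Proof.
  unfold proj_halfwidth, norm2, mat_apply, mat_transpose, mat_id, perp_dir.
  cbn [fst snd m11 m12 m21 m22].
  assert (e : sin t ^ 2 + cos t ^ 2 = 1) by (rewrite <- (sin2_cos2 t); unfold Rsqr; ring).
  transitivity (sqrt 1); [f_equal | apply sqrt_1]. ring_simplify. exact e.
Qed.

Lemma transpose_perp_dir M t : mat_apply (mat_transpose M) (perp_dir t) =
  (- (m11 M * sin t - m21 M * cos t), - (m12 M * sin t - m22 M * cos t)).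
Proof. unfold mat_apply, mat_transpose, perp_dir; cbn; f_equal; ring. Qed.

Lemma proj_halfwidth_ratio L M t t' : 1 <= L -> M = mat_id \/ col_cone L M ->
  in_Q2 t -> in_Q2 t' ->
  0 < proj_halfwidth M t /\
  proj_halfwidth M t' <= (1 + 2 * L * Rabs (t - t')) * proj_halfwidth M t.
Proof.
  intros hL [-> | [c1 c2]] q q'; pose proof (Rabs_pos (t - t')).
  - rewrite !proj_halfwidth_id. nra.
  - destruct (sin_cos_comb_ratio L _ _ t t' hL c1 q q') as [p1 r1].
    destruct (sin_cos_comb_ratio L _ _ t t' hL c2 q q') as [p2 r2].
    destruct (sin_cos_comb_ratio L _ _ t' t hL c1 q' q) as [p1' _].
    destruct (sin_cos_comb_ratio L _ _ t' t hL c2 q' q) as [p2' _].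
    unfold proj_halfwidth; rewrite !transpose_perp_dir. split.
    + apply norm2_pos; cbn [fst]. lra.
    + apply norm2_le_scale; cbn [fst snd]; [nra | |];
        rewrite !Rabs_Ropp, (Rabs_pos_eq (_ * sin t' - _)), (Rabs_pos_eq (_ * sin t - _)); lra.
Qed.

Lemma word_size_halfwidth A d a n t :
  word_size A d a n t = - log2 (proj_halfwidth (word_mat A a n) t).
Proof.
  destruct (word_map_affine A d a n) as [c hc].
  unfold word_size, D_word. rewrite (proj_length_affine_image _ _ _ t hc).
  do 3 f_equal. field.
Qed.

Lemma ln_1_plus_le s : 0 <= s -> ln (1 + s) <= s.
Proof.
  intros hs. destruct (Req_dec s 0) as [-> | ne].
  - rewrite Rplus_0_r, ln_1. lra.
  - pose proof (exp_ineq1 s ne). rewrite <- (ln_exp s) at 2. apply ln_le; lra.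
Qed.

Lemma ln2_pos : 0 < ln 2.
Proof. rewrite <- ln_1. apply ln_increasing; lra. Qed.

Lemma neg_log2_sub_le N N' s : 0 < N -> 0 < N' -> 0 <= s -> N' <= (1 + s) * N ->
  - log2 N - - log2 N' <= s / ln 2.
Proof.
  intros hN hN' hs hle.
  assert (ln N' <= ln N + s).
  { apply Rle_trans with (ln ((1 + s) * N)); [apply ln_le; assumption|].
    rewrite ln_mult by lra. pose proof (ln_1_plus_le s hs). lra. }
  unfold log2. replace (- (ln N / ln 2) - - (ln N' / ln 2)) with ((ln N' - ln N) / ln 2)
    by (field; apply Rgt_not_eq, ln2_pos).
  apply Rmult_le_compat_r; [left; apply Rinv_0_lt_compat, ln2_pos | lra].
Qed.

Theorem lemma5p1 (k : nat) (A : nat -> mat2) (d : nat -> vec2) :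
  (forall i, (i < k)%nat -> mat_pos (A i)) ->
  (forall i, (i < k)%nat -> Rbar_lt (op_norm (A i)) 1) ->
  (forall i, (i < k)%nat -> forall x, unit_disc x -> unit_disc (affine (A i) (d i) x)) ->
  exists C : R,
    forall theta theta' : R, in_Q2 theta -> in_Q2 theta' ->
    forall (n : nat) (a : nat -> nat), (forall j, (a j < k)%nat) ->
      word_size A d a n theta - word_size A d a n theta' <= C * Rabs (theta - theta').
Proof.
  intros Hpos _ _.
  destruct (col_cone_uniform k A Hpos) as [L [hL HL]].
  exists (2 * L / ln 2).
  intros t t' q q' n a Ha.
  assert (Hw : word_mat A a n = mat_id \/ col_cone L (word_mat A a n))
    by (apply word_mat_col_cone; intros j; apply HL, Ha).
  destruct (proj_halfwidth_ratio L _ t t' hL Hw q q') as [hpos hle].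
  destruct (proj_halfwidth_ratio L _ t' t hL Hw q' q) as [hpos' _].
  rewrite !word_size_halfwidth.
  replace (2 * L / ln 2 * Rabs (t - t')) with (2 * L * Rabs (t - t') / ln 2) by
    (field; apply Rgt_not_eq, ln2_pos).
  apply neg_log2_sub_le; try assumption.
  pose proof (Rabs_pos (t - t')). nra.
Qed.
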